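(* Let $P$ be a finite poset and $L\subseteq k[x_P]$ a $P$-stable monomial ideal. If $\mathfrak{p}$ is an associated prime ideal of $L$, then $\mathfrak{p}=(x_p)_{p\in I}$ for some poset ideal $I\subseteq P$.
   Context: $k$ is a field and $k[x_P]$ the polynomial ring in variables $x_p$, $p\in P$. For $b\in P$, a $b$-chain is a multichain $C: p_1\le\dots\le p_r$ with $p_r\le b$; its length is $r$, $m_C=\prod x_{p_i}$; $C$ is in a monomial $m$ if $m_C\mid m$; a longest $b$-chain in $m$ is one of maximal length among $b$-chains in $m$; $C$ goes through $a$ if $a\le b$ and $a$ is comparable to every $p_i$. For an antichain $B$, $m_B=\prod_{b\in B}x_b$. A monomial ideal $I$ is $P$-stable if whenever $m=n\,m_B\in I$ ($n$ a monomial, $B$ an antichain) and $a\in P$ is such that for every $b\in B$ some longest $b$-chain in $m$ goes through $a$, then $n\,x_a\in I$. A poset ideal is a down-closed subset. *)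

From HB Require Import structures.
From mathcomp Require Import all_boot all_order all_algebra.
From mathcomp Require Import mpoly.
From Stdlib Require List.

Set Implicit Arguments.
Unset Strict Implicit.
Unset Printing Implicit Defensive.

Import Order.Theory GRing.Theory.
Local Open Scope ring_scope.
Local Open Scope order_scope.

Section PStable.

Variables (k : fieldType) (d : Order.disp_t) (P : finPOrderType d).

(* k[x_P]: variables indexed by the elements of P (via enum_rank). *)
Definition kxP := {mpoly k[#|P|]}.

Definition xvar (p : P) : kxP := 'X_(enum_rank p).

Definition monP (e : P -> nat) : kxP := \prod_(p : P) xvar p ^+ e p.

Definition monset (B : {set P}) : kxP := \prod_(b in B) xvar b.

Definition antichain (B : {set P}) : Prop :=
  forall x y, x \in B -> y \in B -> (x <= y)%O -> x = y.

(* A b-chain contained in the monomial with exponent vector e: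
   a nonempty multichain p_1 <= ... <= p_r (a sorted list) with p_r <= b
   and m_C | m (each p occurs in C at most e p times). *)
Definition bchain_in (e : P -> nat) (b : P) (C : seq P) : Prop :=
  [/\ C != [::], sorted (fun x y => (x <= y)%O) C,
      (forall p, p \in C -> (p <= b)%O) &
      (forall p, count_mem p C <= e p)%N].

Definition longest_bchain_in (e : P -> nat) (b : P) (C : seq P) : Prop :=
  bchain_in e b C /\ (forall C', bchain_in e b C' -> (size C' <= size C)%N).

Definition goes_through (a b : P) (C : seq P) : Prop :=
  (a <= b)%O /\ (forall p, p \in C -> (a >=< p)%O).

Definition is_ideal (I : kxP -> Prop) : Prop :=
  [/\ I 0, (forall f g, I f -> I g -> I (f + g)) &
      (forall r f, I f -> I (r * f))].

Definition ideal_gen (S : kxP -> Prop) : kxP -> Prop :=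
  fun f => exists s : seq (kxP * kxP),
    (forall q, List.In q s -> S q.2) /\ f = \sum_(q <- s) q.1 * q.2.

Definition monomial_ideal (L : kxP -> Prop) : Prop :=
  exists E : (P -> nat) -> Prop,
    forall f, L f <-> ideal_gen (fun g => exists e, E e /\ g = monP e) f.

(* P-stability.  m = n * m_B with n = monP e, so m has exponent
   vector e + 1_B. *)
Definition P_stable (L : kxP -> Prop) : Prop :=
  forall (e : P -> nat) (B : {set P}) (a : P),
    antichain B ->
    L (monP e * monset B) ->
    (forall b, b \in B -> exists C,
        longest_bchain_in (fun p => e p + (p \in B)) b C /\ goes_through a b C) ->
    L (monP e * xvar a).

Definition prime_ideal (Q : kxP -> Prop) : Prop :=
  [/\ is_ideal Q, ~ Q 1 & (forall f g, Q (f * g) -> Q f \/ Q g)].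

Definition associated_prime (L Q : kxP -> Prop) : Prop :=
  prime_ideal Q /\ exists f : kxP, forall g, Q g <-> L (g * f).

Definition poset_ideal (I : {set P}) : Prop :=
  forall q r, r \in I -> (q <= r)%O -> q \in I.

End PStable.

From HB Require Import structures.
From mathcomp Require Import all_boot all_order all_algebra.
From mathcomp Require Import mpoly.
From mathcomp Require Import ring.
From Stdlib Require Import Classical ClassicalEpsilon.

(* An associated prime Q = (L : f) of a monomial ideal L is monomial: if
   a \in Q, peeling off the leading terms of f shows that a power of the
   leading monomial of a lies in Q, so Q contains every term of its elements;
   being prime, it is generated by the variables it contains.  These form a
   poset ideal: if x_r \in Q, q <= r and x_q \notin Q, then also
   Q = (L : f x_q^N) for N > deg f.  In every term of x_r f x_q^N the exponent
   of x_q exceeds all other exponents together, so every longest r-chain runs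
   through q, and P-stability trades x_r for x_q: x_q f x_q^N \in L, i.e.
   x_q \in Q. *)

Set Implicit Arguments.
Unset Strict Implicit.
Unset Printing Implicit Defensive.

Import Order.Theory GRing.Theory.
Local Open Scope ring_scope.

Section MonomialIdeals.

Variables (k : fieldType) (n : nat).
Local Notation R := {mpoly k[n]}.
Implicit Types (f g a x : R) (m t : 'X_{1..n}).

(* Ideals and primes over any number of variables; for n = #|P| these are
   convertible to is_ideal and prime_ideal. *)
Definition mpoly_ideal (I : R -> Prop) : Prop :=
  [/\ I 0, (forall f g, I f -> I g -> I (f + g)) &
      (forall a f, I f -> I (a * f))].

Definition mpoly_prime (Q : R -> Prop) : Prop :=
  [/\ mpoly_ideal Q, ~ Q 1 & (forall f g, Q (f * g) -> Q f \/ Q g)].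

Definition termwise (I : R -> Prop) : Prop :=
  forall g, I g -> forall m, m \in msupp g -> I 'X_[m].

Lemma mpoly_lead_ind (Pr : R -> Prop) :
  Pr 0 -> (forall g, g != 0 -> Pr (g - g@_(mlead g) *: 'X_[mlead g]) -> Pr g) ->
  forall g, Pr g.
Proof.
move=> Pr0 PrS g; move: {2}(size (msupp g)) (leqnn (size (msupp g))) => s.
elim: s g => [|s IH] g size_g.
  by move: size_g; rewrite leqn0 size_eq0 msupp_eq0 => /eqP ->.
have [-> //|nz_g] := eqVneq g 0.
apply: (PrS _ nz_g); apply: IH.
rewrite (perm_size (msupp_rem _ _)) (size_rem (mlead_supp nz_g)).
by rewrite -subn1 leq_subLR add1n.
Qed.

Section Ideal.

Variable I : R -> Prop.
Hypothesis I_ideal : mpoly_ideal I.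

Lemma idealD f g : I f -> I g -> I (f + g).
Proof. by case: I_ideal => _ + _; apply. Qed.

Lemma idealMl a f : I f -> I (a * f).
Proof. by case: I_ideal => _ _; apply. Qed.

Lemma idealMr a f : I f -> I (f * a).
Proof. by rewrite mulrC; apply: idealMl. Qed.

Lemma idealB f g : I f -> I g -> I (f - g).
Proof. by move=> If Ig; rewrite -mulN1r; apply/idealD/idealMl. Qed.

Lemma idealZ c f : I f -> I (c *: f).
Proof. by rewrite -mul_mpolyC; apply: idealMl. Qed.

Lemma ideal_sum (J : eqType) (r : seq J) (F : J -> R) :
  (forall j, j \in r -> I (F j)) -> I (\sum_(j <- r) F j).
Proof.
move=> IF; rewrite big_seq; apply: big_ind => //; last exact: idealD.
by case: I_ideal.
Qed.

Lemma ideal_of_terms g : (forall m, m \in msupp g -> I 'X_[m]) -> I g.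
Proof.
by move=> Ig; rewrite (mpolyE g); apply: ideal_sum => m /Ig; apply: idealZ.
Qed.

End Ideal.

Section Termwise.

Variable L : R -> Prop.
Hypotheses (L_ideal : mpoly_ideal L) (L_termwise : termwise L).

Lemma termwise_mulX g t :
  L (g * 'X_[t]) <-> (forall m, m \in msupp g -> L 'X_[t + m]).
Proof.
split=> [Lg m g_m | Lm].
  by apply: L_termwise Lg _ _; rewrite (perm_mem (msuppMX _ _)) map_f.
apply: ideal_of_terms => // m'; rewrite (perm_mem (msuppMX _ _)).
by case/mapP=> m g_m ->; apply: Lm.
Qed.

(* Induction on the support of x: the leading monomial of a * x * X^t lies
   in L, so removing the leading term of x costs one more factor X^(mlead a). *)
Lemma mul_lead_power a x t : a != 0 ->
  L (a * x * 'X_[t]) -> exists N, L (x * 'X_[mlead a *+ N + t]).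
Proof.
move=> nz_a; elim/mpoly_lead_ind: x t => [|x nz_x IH] t Lx.
  by exists 0%N; rewrite mul0r; case: L_ideal.
set mx := mlead x; set c := x@_mx; set x' := x - c *: 'X_[mx] in IH.
have L_lead : L 'X_[t + (mlead a + mx)].
  apply: (proj1 (termwise_mulX _ _) Lx); rewrite -mleadM //.
  by apply: mlead_supp; rewrite mulf_neq0.
have [N LN] : exists N, L (x' * 'X_[mlead a *+ N + (mlead a + t)]).
  apply: IH; have -> : a * x' * 'X_[mlead a + t] =
      a * x * 'X_[t] * 'X_[mlead a] - (c%:MP * a) * 'X_[t + (mlead a + mx)].
    by rewrite /x' !mpolyXD -mul_mpolyC; ring.
  by apply: idealB => //; [apply: idealMr | apply: idealMl].
exists N.+1; have -> : x * 'X_[mlead a *+ N.+1 + t] =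
    x' * 'X_[mlead a *+ N + (mlead a + t)] +
    (c%:MP * 'X_[mlead a *+ N]) * 'X_[t + (mlead a + mx)].
  by rewrite /x' mulmSr !mpolyXD -mul_mpolyC; ring.
by apply: idealD => //; apply: idealMl.
Qed.

End Termwise.

Section Prime.

Variable Q : R -> Prop.
Hypothesis Q_prime : mpoly_prime Q.

Lemma mpoly_prime_ideal : mpoly_ideal Q.
Proof. by case: Q_prime. Qed.

Lemma prime_expr g N : Q (g ^+ N) -> Q g.
Proof.
case: Q_prime => _ Q1 QM; elim: N => [|N IH]; first by rewrite expr0.
by rewrite exprS => /QM [|/IH].
Qed.

Lemma prime_monomial_var m : Q 'X_[m] -> exists2 i, (0 < m i)%N & Q 'X_i.
Proof.
case: Q_prime => _ Q1 QM; rewrite mpolyXE_id.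
elim: (index_enum _) => [|i r IH]; first by rewrite big_nil.
rewrite big_cons => /QM [Qi|/IH //]; exists i; last exact: prime_expr Qi.
by rewrite lt0n; apply/eqP => mi0; move: Qi; rewrite mi0 expr0.
Qed.

Lemma prime_colon_mul L f h : (forall g, Q g <-> L (g * f)) -> ~ Q h ->
  forall g, Q g <-> L (g * (f * h)).
Proof.
move=> QL nQh g; rewrite mulrA mulrAC -QL.
case: Q_prime => Q_ideal _ QM; split; first exact: idealMr.
by case/QM.
Qed.

End Prime.

Section AssociatedPrime.

Variables (L Q : R -> Prop) (f : R).
Hypotheses (L_ideal : mpoly_ideal L) (L_termwise : termwise L).
Hypotheses (Q_prime : mpoly_prime Q) (Q_colon : forall g, Q g <-> L (g * f)).

Lemma colon_lead a : a != 0 -> Q a -> Q 'X_[mlead a].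
Proof.
move=> nz_a /Q_colon La.
have := mul_lead_power L_ideal L_termwise (x := f) (t := 0) nz_a.
rewrite mpolyX0 mulr1 => /(_ La) [N]; rewrite addm0 => LN.
by apply: (prime_expr Q_prime (N := N)); apply/Q_colon; rewrite mpolyXn mulrC.
Qed.

Lemma colon_termwise : termwise Q.
Proof.
have Q_ideal := mpoly_prime_ideal Q_prime.
elim/mpoly_lead_ind=> [|g nz_g IH] Qg m; first by rewrite msupp0.
have [-> _|ne_m g_m] := eqVneq m (mlead g); first exact: colon_lead.
apply: IH; first by apply: idealB => //; apply: idealZ => //; exact: colon_lead.
by rewrite (perm_mem (msupp_rem _ _)) (mem_rem_uniq _ (msupp_uniq _)) inE ne_m.
Qed.

End AssociatedPrime.

End MonomialIdeals.

Lemma exists_set_of (T : finType) (A : T -> Prop) :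
  exists S : {set T}, forall x, x \in S <-> A x.
Proof.
exists [set x | excluded_middle_informative (A x)] => x; rewrite inE.
by case: excluded_middle_informative.
Qed.

Lemma count_sum_mem (T : finType) (a : pred T) (s : seq T) :
  count a s = (\sum_(x | a x) count_mem x s)%N.
Proof.
elim: s => [|y s IH] /=; first by rewrite big1.
rewrite IH big_split /=; congr (_ + _)%N.
case: (boolP (a y)) => ay.
  rewrite (bigD1 y) //= eqxx big1 // => x /andP [_].
  by rewrite eq_sym => /negbTE ->.
by rewrite big1 // => x; case: (eqVneq y x) => [<-|//]; rewrite (negbTE ay).
Qed.

Lemma sorted_le_comparable (disp : Order.disp_t) (T : porderType disp)
    (s : seq T) x y :
  sorted <=%O s -> x \in s -> y \in s -> (x >=< y)%O.
Proof.
move=> s_sorted xs ys; rewrite -(nth_index x xs) -(nth_index x ys).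
have le_nth := sorted_leq_nth le_trans lexx x s_sorted.
have in_s z : z \in s -> index z s \in [pred i | (i < size s)%N].
  by rewrite inE index_mem.
have [ij|ji] := leqP (index x s) (index y s).
  by apply: le_comparable; apply: le_nth ij; apply: in_s.
by apply: ge_comparable; apply: le_nth (ltnW ji); apply: in_s.
Qed.

Section PolynomialsOverPoset.

Variables (k : fieldType) (d : Order.disp_t) (P : finPOrderType d).
Local Notation R := (kxP k P).

Lemma monP_X (m : 'X_{1..#|P|}) : monP k (fun p => m (enum_rank p)) = 'X_[m].
Proof.
rewrite /monP mpolyXE_id (reindex (fun i : 'I_#|P| => enum_val i)) /=.
  by apply: eq_bigr => i _; rewrite /xvar enum_valK.
exact: onW_bij (enum_val_bij P).
Qed.

Lemma monPE (e : P -> nat) :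
  monP k e = 'X_[[multinom e (enum_val i) | i < #|P|]].
Proof. by rewrite -monP_X /monP; apply: eq_bigr => p _; rewrite mnmE enum_rankK. Qed.

Lemma ideal_gen_ideal (S : R -> Prop) : is_ideal (ideal_gen S).
Proof.
split.
- by exists [::]; rewrite big_nil.
- move=> f g [s [Ss ->]] [s' [Ss' ->]]; exists (s ++ s'); rewrite big_cat.
  by split=> // q /(List.in_app_or s s' q) [/Ss|/Ss'].
- move=> a f [s [Ss ->]]; exists [seq (a * q.1, q.2) | q <- s]; split.
    by move=> q /List.in_map_iff [q' [<- /Ss]].
  by rewrite big_map mulr_sumr; apply: eq_bigr => q _; rewrite mulrA.
Qed.

Lemma ideal_gen_base (S : R -> Prop) h : S h -> ideal_gen S h.
Proof. by exists [:: (1, h)]; split=> [q [<- | []] | ] //; rewrite big_seq1 mul1r. Qed.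

Lemma ideal_gen_min (S I : R -> Prop) :
  is_ideal I -> (forall h, S h -> I h) -> forall g, ideal_gen S g -> I g.
Proof.
move=> I_ideal SI g [s [Ss ->]]; elim: s Ss => [|q s IH] Ss.
  by rewrite big_nil; case: I_ideal.
rewrite big_cons; apply: (idealD I_ideal).
  by apply: (idealMl I_ideal); apply: SI; exact: (Ss q (or_introl erefl)).
by apply: IH => q' q's; exact: (Ss q' (or_intror q's)).
Qed.

Lemma monomial_ideal_ideal (L : R -> Prop) : monomial_ideal L -> is_ideal L.
Proof.
case=> E LE.
have [gen0 genD genM] := ideal_gen_ideal (fun g => exists e, E e /\ g = monP k e).
split=> [|f g /LE Lf /LE Lg|a f /LE Lf]; apply/LE; auto.
Qed.

Lemma monomial_ideal_termwise (L : R -> Prop) : monomial_ideal L -> termwise L.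
Proof.
move=> L_monomial; have L_ideal := monomial_ideal_ideal L_monomial.
case: L_monomial => E LE g /LE [s [Ss ->]] m.
elim: s Ss => [|[a h] s IH] Ss; first by rewrite big_nil msupp0.
rewrite big_cons => /msuppD_le; rewrite mem_cat => /orP [am | ]; last first.
  by apply: IH => q q's; exact: (Ss q (or_intror q's)).
have [e [Ee /= eh]] := Ss _ (or_introl erefl); rewrite /= eh in am.
move: am; rewrite monPE (perm_mem (msuppMX _ _)) => /mapP [m' _ ->].
rewrite mpolyXD -monPE mulrC; apply: idealMl => //.
by apply/LE/ideal_gen_base; exists e.
Qed.

Lemma termwise_prime_gen (Q : R -> Prop) (I : {set P}) :
  prime_ideal Q -> termwise Q -> (forall q, q \in I <-> Q (xvar k q)) ->
  forall g, Q g <-> ideal_gen (fun h => exists q, q \in I /\ h = xvar k q) g.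
Proof.
move=> Q_prime Q_termwise QI g; split => [Qg | ]; last first.
  apply: ideal_gen_min => [|_ [q [/QI Qq ->]]] //; exact: mpoly_prime_ideal.
apply: ideal_of_terms (ideal_gen_ideal _) _ _ => m /(Q_termwise _ Qg).
case/(prime_monomial_var Q_prime) => i mi Qi.
rewrite -(submK (m := U_(i)) (m' := m)) ?lep1mP -?lt0n // mpolyXD.
apply: idealMl (ideal_gen_ideal _) _ _ _; apply: ideal_gen_base.
exists (enum_val i); rewrite /xvar enum_valK; split=> //.
by apply/QI; rewrite /xvar enum_valK.
Qed.

Section Chains.

Variables (e : P -> nat) (b : P).

Lemma bchain_size_le C : bchain_in e b C -> (size C <= \sum_p e p)%N.
Proof. by case=> _ _ _ Ce; rewrite -count_predT count_sum_mem; apply: leq_sum. Qed.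

Lemma exists_longest_bchain C0 : bchain_in e b C0 ->
  exists C, longest_bchain_in e b C.
Proof.
move=> C0_chain; apply: NNPP => no_longest.
have longer C : bchain_in e b C ->
    exists C', bchain_in e b C' /\ (size C < size C')%N.
  move=> C_chain; apply: NNPP => no_longer; apply: no_longest; exists C.
  split=> // C' C'_chain; rewrite leqNgt; apply/negP => ltCC'.
  by apply: no_longer; exists C'.
have long i : exists C, bchain_in e b C /\ (i <= size C)%N.
  elim: i => [|i [C [C_chain le_iC]]]; first by exists C0.
  have [C' [C'_chain ltCC']] := longer C C_chain.
  by exists C'; split=> //; apply: leq_ltn_trans ltCC'.
have [C [C_chain]] := long (\sum_p e p).+1.
by rewrite ltnNge bchain_size_le.
Qed.

Lemma nseq_bchain q : (0 < e q)%N -> (q <= b)%O -> bchain_in e b (nseq (e q) q).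
Proof.
move=> eq_gt0 qb; split.
- by rewrite -size_eq0 size_nseq -lt0n.
- by case: (e q) => //= j; elim: j => //= j ->; rewrite lexx.
- by move=> p /nseqP [-> _].
- by move=> p; rewrite count_nseq /=; case: eqVneq => [<-|]; rewrite ?mul1n ?mul0n.
Qed.

Lemma longest_bchain_mem q C : (q <= b)%O ->
  (\sum_(p | p != q) e p < e q)%N -> longest_bchain_in e b C -> q \in C.
Proof.
move=> qb dom [[_ _ _ Ce] C_max]; apply: contraT => qNC.
have size_C : size C = (\sum_(p | p != q) count_mem p C)%N.
  rewrite -(count_sum_mem (predC1 q)); apply/esym/eqP; rewrite -all_count.
  by apply/allP => p pC; apply: contraNneq qNC => <-.
have le_C : (size C <= \sum_(p | p != q) e p)%N by rewrite size_C; apply: leq_sum.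
have := C_max _ (nseq_bchain (leq_ltn_trans (leq0n _) dom) qb).
by rewrite size_nseq leqNgt (leq_ltn_trans le_C dom).
Qed.

Lemma longest_bchain_through q : (q <= b)%O ->
  (\sum_(p | p != q) e p < e q)%N ->
  exists C, longest_bchain_in e b C /\ goes_through q b C.
Proof.
move=> qb dom.
have eq_gt0 : (0 < e q)%N := leq_ltn_trans (leq0n _) dom.
have [C C_longest] := exists_longest_bchain (nseq_bchain eq_gt0 qb).
exists C; split=> //; split=> // p pC.
case: (C_longest) => [[_ C_sorted _ _] _].
exact: sorted_le_comparable C_sorted (longest_bchain_mem qb dom C_longest) pC.
Qed.

End Chains.

Lemma P_stable_down (L : R -> Prop) (e : P -> nat) q r :
  P_stable L -> (q <= r)%O -> ((\sum_(p | p != q) e p).+1 < e q)%N ->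
  L (monP k e * xvar k r) -> L (monP k e * xvar k q).
Proof.
move=> L_stable qr dom Lr; have [-> //|ne_qr] := eqVneq q r.
apply: (L_stable e [set r] q).
- by move=> x y; rewrite !inE => /eqP -> /eqP ->.
- by rewrite /monset big_set1.
move=> _ /set1P ->; apply: longest_bchain_through => //.
suff dom_r : (\sum_(p | p != q) (e p + (p \in [set r]))
              < e q + (q \in [set r]))%N.
  exact: dom_r.
rewrite big_split /=.
have -> : (\sum_(p | p != q) (p \in [set r]))%N = 1%N.
  rewrite (bigD1 r) 1?eq_sym //= inE eqxx big1 // => p /andP [_].
  by rewrite inE => /negbTE ->.
by rewrite inE (negbTE ne_qr) addn0 addn1.
Qed.

(* The exponent (msize f).+1 of x_q makes q dominate every term of
   x_r * f * x_q^(msize f).+1, so P-stability may trade x_r for x_q. *)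
Lemma P_stable_colon_down (L : R -> Prop) f q r :
  is_ideal L -> termwise L -> P_stable L -> (q <= r)%O ->
  L (xvar k r * (f * xvar k q ^+ (msize f).+1)) ->
  L (xvar k q * (f * xvar k q ^+ (msize f).+1)).
Proof.
move=> L_ideal L_termwise L_stable qr.
rewrite !(mulrCA (xvar k _)) /xvar mpolyXn -!mpolyXD.
move=> /(termwise_mulX L_ideal L_termwise) Lr.
apply/(termwise_mulX L_ideal L_termwise) => m f_m.
set mq := (U_(enum_rank q) *+ (msize f).+1)%MM.
have := @P_stable_down L (fun p => (mq + m)%MM (enum_rank p)) q r L_stable qr.
rewrite monP_X /xvar -!mpolyXD ![(mq + m + _)%MM]addmC !addmA.
apply; last exact: Lr.
have mq_q : (mq (enum_rank q) = (msize f).+1)%N by rewrite mulmnE mnm1E eqxx mul1n.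
have mq_p p : p != q -> mq (enum_rank p) = 0%N.
  move=> ne_pq; rewrite mulmnE mnm1E (inj_eq enum_rank_inj).
  by rewrite eq_sym (negbTE ne_pq).
have le_mdeg : (\sum_(p | p != q) (mq + m)%MM (enum_rank p) <= mdeg m)%N.
  rewrite (eq_bigr (fun p => m (enum_rank p))) => [|p ne_pq]; last first.
    by rewrite mnmDE mq_p.
  rewrite mdegE (reindex (@enum_rank P)) /=; last first.
    exact: onW_bij (enum_rank_bij P).
  by rewrite [X in (_ <= X)%N](bigID (fun p => p != q)) leq_addr.
rewrite mnmDE mq_q; apply: leq_trans (leq_addr _ _); rewrite ltnS.
exact: leq_ltn_trans le_mdeg (msize_mdeg_lt f_m).
Qed.

End PolynomialsOverPoset.

Theorem proposition3p18 (k : fieldType) (d : Order.disp_t) (P : finPOrderType d)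
    (L Q : kxP k P -> Prop) :
  monomial_ideal L -> P_stable L -> associated_prime L Q ->
  exists I : {set P}, poset_ideal I /\
    (forall g, Q g <-> ideal_gen (fun h => exists q, q \in I /\ h = xvar k q) g).
Proof.
move=> L_monomial L_stable [Q_prime [f Q_colon]].
have L_ideal := monomial_ideal_ideal L_monomial.
have L_termwise := monomial_ideal_termwise L_monomial.
have [I QI] := exists_set_of (fun p => Q (xvar k p)).
exists I; split; last first.
  apply: termwise_prime_gen QI => //.
  exact: colon_termwise L_ideal L_termwise Q_prime Q_colon.
move=> q r /QI Qr qr; apply/QI; have [//|nQq] := classic (Q (xvar k q)).
have Q_colon_xq := prime_colon_mul Q_prime Q_colon (h := xvar k q ^+ (msize f).+1)
  (fun Qh => nQq (prime_expr Q_prime Qh)).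
by apply/Q_colon_xq; apply: P_stable_colon_down qr _ => //; apply/Q_colon_xq.
Qed.
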